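(* Let $K\subseteq\mathbb{R}^d$ be compact, let $f:K\to\mathbb{R}$ and $F:K\to\mathbb{R}^d$ be continuous, and let $\gamma:[a,b]\to K$ be a rectifiable path. Suppose that for all but finitely many points $x\in\gamma([a,b])$ one has $\lim_{y\to x,\,y\in K\setminus\{x\}}\frac{f(y)-f(x)-\langle F(x),y-x\rangle}{|y-x|}=0$. Then $\int_\gamma F=f(\gamma(b))-f(\gamma(a))$.
   Context: A path $\gamma:[a,b]\to K$ is a continuous map; its length is $L(\gamma)=\sup\{\sum_{j=1}^n|\gamma(t_j)-\gamma(t_{j-1})|: a=t_0<\dots<t_n=b\}$, and $\gamma$ is rectifiable if $L(\gamma)<\infty$. For continuous $F:K\to\mathbb{R}^d$ and rectifiable $\gamma$, the path integral $\int_\gamma F$ is the limit of the Riemann–Stieltjes sums $\sum_{j=1}^n\langle F(\gamma(\tau_j)),\gamma(t_j)-\gamma(t_{j-1})\rangle$ over partitions $a=t_0<\dots<t_n=b$ with mesh tending to $0$ and $t_{j-1}\le\tau_j\le t_j$. *)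

From Stdlib Require Import Reals Lra List.
Open Scope R_scope.

(* Points of R^d are represented as functions nat -> R; a point of R^d is one
   that vanishes at all indices >= d. *)
Definition vec := nat -> R.

Definition in_Rd (d : nat) (x : vec) : Prop := forall i, (d <= i)%nat -> x i = 0.

Fixpoint rsum (n : nat) (g : nat -> R) : R :=
  match n with
  | O => 0
  | S m => rsum m g + g m
  end.

Definition vsub (u v : vec) : vec := fun i => u i - v i.

Definition dot (d : nat) (u v : vec) : R := rsum d (fun i => u i * v i).
Definition vnorm (d : nat) (u : vec) : R := sqrt (dot d u u).

(* Compactness of a subset of R^d (sequential compactness, equivalent in metric spaces). *)
Definition compact_set (d : nat) (K : vec -> Prop) : Prop :=
  forall u : nat -> vec, (forall n, K (u n)) ->
  exists (phi : nat -> nat) (l : vec),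
    (forall n, (phi n < phi (S n))%nat) /\ K l /\
    forall eps, 0 < eps -> exists N, forall n, (N <= n)%nat ->
      vnorm d (vsub (u (phi n)) l) < eps.

Definition cont_on_scalar (d : nat) (K : vec -> Prop) (f : vec -> R) : Prop :=
  forall x, K x -> forall eps, 0 < eps -> exists delta, 0 < delta /\
    forall y, K y -> vnorm d (vsub y x) < delta -> Rabs (f y - f x) < eps.

Definition cont_on_vec (d : nat) (K : vec -> Prop) (F : vec -> vec) : Prop :=
  forall x, K x -> forall eps, 0 < eps -> exists delta, 0 < delta /\
    forall y, K y -> vnorm d (vsub y x) < delta -> vnorm d (vsub (F y) (F x)) < eps.

Definition is_path (d : nat) (K : vec -> Prop) (gamma : R -> vec) (a b : R) : Prop :=
  (forall t, a <= t <= b -> K (gamma t)) /\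
  forall t, a <= t <= b -> forall eps, 0 < eps -> exists delta, 0 < delta /\
    forall s, a <= s <= b -> Rabs (s - t) < delta ->
      vnorm d (vsub (gamma s) (gamma t)) < eps.

Definition is_partition (a b : R) (n : nat) (t : nat -> R) : Prop :=
  (1 <= n)%nat /\ t O = a /\ t n = b /\ forall j, (j < n)%nat -> t j < t (S j).

Definition poly_sum (d : nat) (gamma : R -> vec) (n : nat) (t : nat -> R) : R :=
  rsum n (fun j => vnorm d (vsub (gamma (t (S j))) (gamma (t j)))).

Definition rectifiable (d : nat) (gamma : R -> vec) (a b : R) : Prop :=
  exists M, forall n t, is_partition a b n t -> poly_sum d gamma n t <= M.

(* Riemann--Stieltjes sum with tags tau_j in [t_{j-1}, t_j], j = 1..n
   (here indexed j = 0..n-1 with tau j in [t j, t (S j)]). *)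
Definition rs_sum (d : nat) (F : vec -> vec) (gamma : R -> vec)
  (n : nat) (t tau : nat -> R) : R :=
  rsum n (fun j => dot d (F (gamma (tau j))) (vsub (gamma (t (S j))) (gamma (t j)))).

Definition path_integral_is (d : nat) (F : vec -> vec) (gamma : R -> vec)
  (a b : R) (I : R) : Prop :=
  forall eps, 0 < eps -> exists delta, 0 < delta /\
    forall n t tau, is_partition a b n t ->
      (forall j, (j < n)%nat -> t (S j) - t j < delta) ->
      (forall j, (j < n)%nat -> t j <= tau j <= t (S j)) ->
      Rabs (rs_sum d F gamma n t tau - I) < eps.

Definition strong_deriv_at (d : nat) (K : vec -> Prop) (f : vec -> R) (F : vec -> vec)
  (x : vec) : Prop :=
  forall eps, 0 < eps -> exists delta, 0 < delta /\
    forall y, K y -> 0 < vnorm d (vsub y x) < delta ->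
      Rabs ((f y - f x - dot d (F x) (vsub y x)) / vnorm d (vsub y x)) < eps.

(* On every interval [u, v] and for all e1, s > 0 some tagged partition has a
   Riemann-Stieltjes sum within e1 * (polygonal length) + s of the increment
   f(gamma v) - f(gamma u).  Near a point of differentiability a single step errs by
   at most e1 times its length; real induction glues such steps together, continuity
   of f o gamma absorbs the endpoints, and the finitely many exceptional points are
   removed one at a time.  Now take a fine partition of [a, b] with arbitrary tags
   and refine each of its steps in this way: uniform continuity of F o gamma bounds
   the cost of moving the tags, and rectifiability bounds the total polygonal
   length, so the Riemann-Stieltjes sum is close to f(gamma b) - f(gamma a). *)

From Stdlib Require Import Reals Lra Lia List Classical.
Open Scope R_scope.

Lemma rsum_ext n g h : (forall i, (i < n)%nat -> g i = h i) -> rsum n g = rsum n h.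
Proof.
  induction n as [|n IH]; intros H; simpl; [reflexivity|].
  rewrite IH, (H n) by (try intros; try apply H; lia); reflexivity.
Qed.

Lemma rsum_plus n g h : rsum n (fun i => g i + h i) = rsum n g + rsum n h.
Proof. induction n; simpl; [lra|]. rewrite IHn; lra. Qed.

Lemma rsum_minus n g h : rsum n (fun i => g i - h i) = rsum n g - rsum n h.
Proof. induction n; simpl; [lra|]. rewrite IHn; lra. Qed.

Lemma rsum_scal n c g : rsum n (fun i => c * g i) = c * rsum n g.
Proof. induction n; simpl; [lra|]. rewrite IHn; lra. Qed.

Lemma rsum_const n c : rsum n (fun _ => c) = INR n * c.
Proof. induction n; simpl rsum; [simpl; lra|]. rewrite IHn, S_INR; lra. Qed.

Lemma rsum_le n g h : (forall i, (i < n)%nat -> g i <= h i) -> rsum n g <= rsum n h.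
Proof.
  induction n as [|n IH]; intros H; simpl; [lra|].
  pose proof (IH (fun i Hi => H i ltac:(lia))). pose proof (H n ltac:(lia)). lra.
Qed.

Lemma rsum_nonneg n g : (forall i, (i < n)%nat -> 0 <= g i) -> 0 <= rsum n g.
Proof.
  intros H. replace 0 with (rsum n (fun _ => 0)) by (rewrite rsum_const; lra).
  now apply rsum_le.
Qed.

Lemma rsum_abs n g : Rabs (rsum n g) <= rsum n (fun i => Rabs (g i)).
Proof.
  induction n; simpl; [rewrite Rabs_R0; lra|].
  eapply Rle_trans; [apply Rabs_triang|]. lra.
Qed.

Lemma rsum_split n1 n2 g :
  rsum (n1 + n2) g = rsum n1 g + rsum n2 (fun k => g (n1 + k)%nat).
Proof.
  induction n2; simpl; [rewrite Nat.add_0_r; lra|].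
  rewrite Nat.add_succ_r; simpl. rewrite IHn2; lra.
Qed.

Lemma rsum_telescope n (x : nat -> R) : rsum n (fun k => x (S k) - x k) = x n - x O.
Proof. induction n; simpl; [lra|]. rewrite IHn; lra. Qed.

Lemma rsum_term_le n g i :
  (forall j, (j < n)%nat -> 0 <= g j) -> (i < n)%nat -> g i <= rsum n g.
Proof.
  induction n as [|n IH]; intros H Hi; [lia|]. simpl.
  destruct (Nat.eq_dec i n) as [->|Hne].
  - pose proof (rsum_nonneg n g (fun j Hj => H j ltac:(lia))). lra.
  - pose proof (IH (fun j Hj => H j ltac:(lia)) ltac:(lia)). pose proof (H n ltac:(lia)). lra.
Qed.

(* The l1 norm bounds the inner product against the Euclidean norm without Cauchy-Schwarz. *)
Definition norm1 d (u : vec) : R := rsum d (fun i => Rabs (u i)).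

Lemma dot_vsub_r d w x y : dot d w (vsub x y) = dot d w x - dot d w y.
Proof. unfold dot, vsub. rewrite <- rsum_minus. apply rsum_ext; intros; ring. Qed.

Lemma dot_vsub_l d x y w : dot d (vsub x y) w = dot d x w - dot d y w.
Proof. unfold dot, vsub. rewrite <- rsum_minus. apply rsum_ext; intros; ring. Qed.

Lemma vnorm_nonneg d u : 0 <= vnorm d u.
Proof. apply sqrt_pos. Qed.

Lemma vnorm_sym d x y : vnorm d (vsub x y) = vnorm d (vsub y x).
Proof. unfold vnorm, dot, vsub. f_equal. apply rsum_ext; intros; ring. Qed.

Lemma coord_le_vnorm d u i : (i < d)%nat -> Rabs (u i) <= vnorm d u.
Proof.
  intros Hi. rewrite <- sqrt_Rsqr_abs. apply sqrt_le_1_alt. unfold Rsqr.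
  apply (rsum_term_le d (fun i => u i * u i)); auto. intros; nra.
Qed.

Lemma vnorm_eq0_coord d u i : vnorm d u = 0 -> (i < d)%nat -> u i = 0.
Proof.
  intros H Hi. pose proof (coord_le_vnorm d u i Hi) as Hc. rewrite H in Hc.
  destruct (Req_dec (u i) 0) as [|Hne]; [assumption|].
  pose proof (Rabs_pos_lt _ Hne). lra.
Qed.

Lemma dot_coords0_r d w v : (forall i, (i < d)%nat -> v i = 0) -> dot d w v = 0.
Proof.
  intros H. unfold dot. rewrite (rsum_ext _ _ (fun _ => 0)), rsum_const; [lra|].
  intros i Hi. rewrite H by exact Hi. ring.
Qed.

Lemma vnorm_eq0_of_coords d u : (forall i, (i < d)%nat -> u i = 0) -> vnorm d u = 0.
Proof. intros H. unfold vnorm. rewrite dot_coords0_r by exact H. apply sqrt_0. Qed.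

Lemma norm1_nonneg d u : 0 <= norm1 d u.
Proof. apply rsum_nonneg; intros; apply Rabs_pos. Qed.

Lemma dot_le_norm1_vnorm d u v : Rabs (dot d u v) <= norm1 d u * vnorm d v.
Proof.
  unfold dot, norm1. eapply Rle_trans; [apply rsum_abs|].
  rewrite Rmult_comm, <- rsum_scal. apply rsum_le. intros i Hi.
  rewrite Rabs_mult. pose proof (coord_le_vnorm d v i Hi). pose proof (Rabs_pos (u i)). nra.
Qed.

Lemma norm1_le_vnorm d u : norm1 d u <= INR d * vnorm d u.
Proof. rewrite <- rsum_const. apply rsum_le. intros; now apply coord_le_vnorm. Qed.

Lemma norm1_triangle d x y z :
  norm1 d (vsub x z) <= norm1 d (vsub x y) + norm1 d (vsub y z).
Proof.
  unfold norm1, vsub. rewrite <- rsum_plus. apply rsum_le; intros.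
  replace (x i - z i) with ((x i - y i) + (y i - z i)) by ring. apply Rabs_triang.
Qed.

Lemma norm1_sym d x y : norm1 d (vsub x y) = norm1 d (vsub y x).
Proof. unfold norm1, vsub. apply rsum_ext; intros. rewrite <- Rabs_Ropp. f_equal; ring. Qed.

Lemma cont_on_scalar_dist0 d K f x y : cont_on_scalar d K f -> K x -> K y ->
  vnorm d (vsub y x) = 0 -> f y = f x.
Proof.
  intros Hf Kx Ky H0. apply NNPP; intros Hne.
  assert (Hpos : 0 < Rabs (f y - f x)) by (apply Rabs_pos_lt; lra).
  destruct (Hf x Kx _ Hpos) as (delta & Hdelta & Hc).
  specialize (Hc y Ky ltac:(lra)). lra.
Qed.

Lemma cont_on_vec_norm1 d K F x : cont_on_vec d K F -> K x -> forall eps, 0 < eps ->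
  exists delta, 0 < delta /\ forall y, K y -> vnorm d (vsub y x) < delta ->
    norm1 d (vsub (F y) (F x)) < eps.
Proof.
  intros HF Kx eps Heps. pose proof (pos_INR d).
  destruct (HF x Kx (eps / (INR d + 1))) as (delta & Hdelta & Hc);
    [apply Rdiv_lt_0_compat; lra|].
  exists delta; split; [exact Hdelta|]. intros y Ky Hy.
  specialize (Hc y Ky Hy). pose proof (norm1_le_vnorm d (vsub (F y) (F x))).
  pose proof (vnorm_nonneg d (vsub (F y) (F x))).
  apply (Rmult_lt_compat_l (INR d + 1)) in Hc; [|lra].
  replace ((INR d + 1) * (eps / (INR d + 1))) with eps in Hc by (field; lra). nra.
Qed.

(** * Real induction and compactness of intervals *)

Lemma real_induction (lo hi : R) (P : R -> Prop) : lo <= hi -> P lo ->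
  (forall x, lo <= x < hi -> P x ->
     exists y, x < y /\ forall z, x <= z <= y -> z <= hi -> P z) ->
  (forall x, lo < x <= hi -> (forall z, lo <= z < x -> P z) -> P x) ->
  P hi.
Proof.
  intros Hle Hlo Hstep Hclosed.
  set (S := fun x => lo <= x <= hi /\ forall z, lo <= z <= x -> P z).
  assert (Slo : S lo) by (split; [lra|]; intros z Hz; now replace z with lo by lra).
  destruct (completeness S) as (m & Hub & Hlub);
    [exists hi; intros x (Hx & _); lra | now exists lo |].
  assert (Hm : lo <= m <= hi) by (split; [now apply Hub | apply Hlub; intros x (Hx & _); lra]).
  assert (Hbelow : forall z, lo <= z < m -> P z).
  { intros z Hz. destruct (classic (exists x, S x /\ z < x)) as [(x & (_ & Hx) & Hzx)|Hn].
    - apply Hx; lra.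
    - exfalso. enough (m <= z) by lra. apply Hlub. intros x Sx.
      destruct (Rle_lt_dec x z); [assumption|]. exfalso; apply Hn; eauto. }
  assert (Pm : P m) by (destruct (Req_dec m lo) as [->|]; [assumption|apply Hclosed; auto; lra]).
  destruct (Req_dec m hi) as [<-|Hmhi]; [exact Pm|].
  destruct (Hstep m ltac:(lra) Pm) as (y & Hy & Hext).
  assert (HS : S (Rmin y hi)).
  { pose proof (Rmin_l y hi). pose proof (Rmin_r y hi).
    split; [split; [apply Rmin_glb|]; lra|].
    intros z Hz. destruct (Rlt_le_dec z m); [apply Hbelow | apply Hext]; lra. }
  apply Hub in HS. unfold Rmin in HS. destruct (Rle_dec y hi); lra.
Qed.

Section ClosedSets.

Variables (A : R -> Prop) (u v : R).
Hypothesis A_bounded : forall t, A t -> u <= t <= v.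
Hypothesis A_closed : forall m, u <= m <= v ->
  (forall r, 0 < r -> exists t, A t /\ Rabs (t - m) < r) -> A m.

Lemma closed_set_has_max : (exists t, A t) -> exists w, A w /\ forall t, A t -> t <= w.
Proof.
  intros Hne. destruct (completeness A) as (m & Hub & Hlub);
    [exists v; intros x Hx; apply A_bounded in Hx; lra | exact Hne |].
  destruct Hne as (t0 & Ht0).
  assert (Hm : u <= m <= v).
  { pose proof (A_bounded _ Ht0). pose proof (Hub _ Ht0).
    split; [lra | apply Hlub; intros x Hx; apply A_bounded in Hx; lra]. }
  exists m. split; [|exact Hub]. apply A_closed; [exact Hm|]. intros r Hr.
  destruct (classic (exists t, A t /\ m - r < t)) as [(t & Ht & Htr)|Hn].
  - exists t; split; [assumption|]. pose proof (Hub _ Ht). rewrite Rabs_left1; lra.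
  - exfalso. enough (m <= m - r) by lra. apply Hlub. intros x Hx.
    destruct (Rle_lt_dec x (m - r)); [assumption|]. exfalso; apply Hn; eauto.
Qed.

End ClosedSets.

Lemma closed_set_has_min (A : R -> Prop) u v :
  (forall t, A t -> u <= t <= v) ->
  (forall m, u <= m <= v -> (forall r, 0 < r -> exists t, A t /\ Rabs (t - m) < r) -> A m) ->
  (exists t, A t) -> exists w, A w /\ forall t, A t -> w <= t.
Proof.
  intros Hb Hc (t0 & Ht0).
  destruct (closed_set_has_max (fun y => A (- y)) (- v) (- u)) as (w & Hw & Hmax).
  - intros t Ht. apply Hb in Ht. lra.
  - intros m Hm Hap. apply Hc; [lra|]. intros r Hr. destruct (Hap r Hr) as (t & Ht & Htm).
    exists (- t). split; [assumption|].
    replace (- t - - m) with (- (t - m)) by ring. now rewrite Rabs_Ropp.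
  - exists (- t0). now rewrite Ropp_involutive.
  - exists (- w). split; [assumption|]. intros t Ht.
    enough (- t <= w) by lra. apply Hmax. now rewrite Ropp_involutive.
Qed.

Lemma uniform_continuity_norm1 d (phi : R -> vec) a b : a <= b ->
  (forall x, a <= x <= b -> forall eps, 0 < eps -> exists r, 0 < r /\
     forall z, a <= z <= b -> Rabs (z - x) < r -> norm1 d (vsub (phi z) (phi x)) < eps) ->
  forall eps, 0 < eps -> exists delta, 0 < delta /\
    forall s s', a <= s <= b -> a <= s' <= b -> Rabs (s - s') < delta ->
      norm1 d (vsub (phi s) (phi s')) <= eps.
Proof.
  intros Hab Hcont eps Heps.
  assert (Hball : forall x, a <= x <= b -> exists r, 0 < r /\
    forall s s', a <= s <= b -> a <= s' <= b -> Rabs (s - x) < r -> Rabs (s' - x) < r ->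
      norm1 d (vsub (phi s) (phi s')) <= eps).
  { intros x Hx. destruct (Hcont x Hx (eps / 2)) as (r & Hr & Hc); [lra|].
    exists r; split; [exact Hr|]. intros s s' Hs Hs' H1 H2.
    eapply Rle_trans; [apply (norm1_triangle _ _ (phi x))|].
    rewrite (norm1_sym _ (phi x)). pose proof (Hc s Hs H1). pose proof (Hc s' Hs' H2). lra. }
  set (P := fun x => exists delta, 0 < delta /\ forall s s', a <= s <= x -> a <= s' <= x ->
    Rabs (s - s') < delta -> norm1 d (vsub (phi s) (phi s')) <= eps).
  enough (P b) as (delta & Hdelta & H) by (exists delta; auto).
  apply (real_induction a b P Hab).
  - exists 1. split; [lra|]. intros s s' Hs Hs' _.
    replace s with a by lra; replace s' with a by lra.
    unfold norm1, vsub. rewrite (rsum_ext _ _ (fun _ => 0)), rsum_const; [lra|].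
    intros; now rewrite Rminus_diag, Rabs_R0.
  - intros x Hx (delta & Hdelta & H). destruct (Hball x ltac:(lra)) as (r & Hr & Hc).
    exists (x + r / 2). split; [lra|]. intros z Hz Hzb.
    exists (Rmin delta (r / 2)). pose proof (Rmin_l delta (r / 2)). pose proof (Rmin_r delta (r / 2)).
    split; [apply Rmin_glb_lt; lra|]. intros s s' Hs Hs' Hss.
    apply Rabs_def2 in Hss.
    destruct (Rle_dec s x), (Rle_dec s' x);
      [apply H; [lra | lra | apply Rabs_def1; lra]
      | apply Hc; lra || (apply Rabs_def1; lra) ..].
  - intros x Hx Hbelow. destruct (Hball x ltac:(lra)) as (r & Hr & Hc).
    set (z := Rmax a (x - r / 2)).
    assert (Hz : a <= z < x /\ x - r / 2 <= z)
      by (unfold z; repeat split; [apply Rmax_l | apply Rmax_lub_lt; lra | apply Rmax_r]).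
    destruct (Hbelow z ltac:(lra)) as (delta & Hdelta & H).
    exists (Rmin delta (r / 2)). pose proof (Rmin_l delta (r / 2)). pose proof (Rmin_r delta (r / 2)).
    split; [apply Rmin_glb_lt; lra|]. intros s s' Hs Hs' Hss.
    apply Rabs_def2 in Hss.
    destruct (Rle_dec s z), (Rle_dec s' z);
      [apply H; [lra | lra | apply Rabs_def1; lra]
      | apply Hc; lra || (apply Rabs_def1; lra) ..].
Qed.

(** * Tagged partitions *)

Definition tagged_partition (u v : R) n (t tau : nat -> R) : Prop :=
  t O = u /\ t n = v /\ (forall j, (j < n)%nat -> t j < t (S j)) /\
  (forall j, (j < n)%nat -> t j <= tau j <= t (S j)).

Lemma tagged_partition_mono u v n t tau : tagged_partition u v n t tau ->
  forall j k, (j <= k <= n)%nat -> t j <= t k.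
Proof.
  intros (_ & _ & Hinc & _) j k Hjk. replace k with (j + (k - j))%nat by lia.
  assert (Hk : (j + (k - j) <= n)%nat) by lia. revert Hk.
  induction (k - j)%nat as [|m IH]; intros Hk; [rewrite Nat.add_0_r; lra|].
  rewrite Nat.add_succ_r in *. pose proof (Hinc (j + m)%nat ltac:(lia)). pose proof (IH ltac:(lia)). lra.
Qed.

Lemma tagged_partition_range u v n t tau : tagged_partition u v n t tau ->
  forall j, (j <= n)%nat -> u <= t j <= v.
Proof.
  intros H j Hj. pose proof (tagged_partition_mono _ _ _ _ _ H) as Hm.
  destruct H as (H0 & Hn & _). rewrite <- H0, <- Hn. split; apply Hm; lia.
Qed.

Lemma tagged_partition_tag_range u v n t tau : tagged_partition u v n t tau ->
  forall j, (j < n)%nat -> u <= tau j <= v.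
Proof.
  intros H j Hj. pose proof (tagged_partition_range _ _ _ _ _ H j ltac:(lia)).
  pose proof (tagged_partition_range _ _ _ _ _ H (S j) ltac:(lia)).
  destruct H as (_ & _ & _ & Htag). specialize (Htag j Hj). lra.
Qed.

Lemma tagged_partition_is_partition u v n t tau : u < v ->
  tagged_partition u v n t tau -> is_partition u v n t.
Proof.
  intros Huv (T0 & Tn & Hinc & _). repeat split; auto.
  destruct n; [rewrite Tn in T0; lra | lia].
Qed.

Lemma tagged_partition_refl u : tagged_partition u u O (fun _ => u) (fun _ => u).
Proof. repeat split; intros; lia. Qed.

Definition cat_pts n1 (t1 t2 : nat -> R) k := if (k <=? n1)%nat then t1 k else t2 (k - n1)%nat.
Definition cat_tags n1 (t1 t2 : nat -> R) k := if (k <? n1)%nat then t1 k else t2 (k - n1)%nat.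

Lemma cat_pts_lo n1 t1 t2 k : (k <= n1)%nat -> cat_pts n1 t1 t2 k = t1 k.
Proof. intros; unfold cat_pts. destruct (Nat.leb_spec k n1); [reflexivity|lia]. Qed.

Lemma cat_pts_hi n1 t1 t2 k : t1 n1 = t2 O -> cat_pts n1 t1 t2 (n1 + k) = t2 k.
Proof.
  intros H; unfold cat_pts. destruct (Nat.leb_spec (n1 + k) n1).
  - replace k with O by lia. now rewrite Nat.add_0_r.
  - f_equal; lia.
Qed.

Lemma cat_tags_lo n1 t1 t2 k : (k < n1)%nat -> cat_tags n1 t1 t2 k = t1 k.
Proof. intros; unfold cat_tags. destruct (Nat.ltb_spec k n1); [reflexivity|lia]. Qed.

Lemma cat_tags_hi n1 t1 t2 k : cat_tags n1 t1 t2 (n1 + k) = t2 k.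
Proof. unfold cat_tags. destruct (Nat.ltb_spec (n1 + k) n1); [lia|]. f_equal; lia. Qed.

Section Concatenation.

Variables (u v w : R) (n1 n2 : nat) (t1 tau1 t2 tau2 : nat -> R).
Hypothesis P1 : tagged_partition u v n1 t1 tau1.
Hypothesis P2 : tagged_partition v w n2 t2 tau2.

Let junction : t1 n1 = t2 O.
Proof. destruct P1 as (_ & -> & _); now destruct P2 as (-> & _). Qed.

Let cat_index (Q : nat -> R -> R -> R -> Prop) :
  (forall j, (j < n1)%nat -> Q j (t1 j) (t1 (S j)) (tau1 j)) ->
  (forall j, (j < n2)%nat -> Q (n1 + j)%nat (t2 j) (t2 (S j)) (tau2 j)) ->
  forall j, (j < n1 + n2)%nat ->
    Q j (cat_pts n1 t1 t2 j) (cat_pts n1 t1 t2 (S j)) (cat_tags n1 tau1 tau2 j).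
Proof.
  intros H1 H2 j Hj. destruct (Nat.lt_ge_cases j n1) as [Hl|Hl].
  - rewrite !cat_pts_lo, cat_tags_lo by lia. now apply H1.
  - replace j with (n1 + (j - n1))%nat by lia.
    replace (S (n1 + (j - n1))) with (n1 + S (j - n1))%nat by lia.
    rewrite !cat_pts_hi, cat_tags_hi by exact junction. apply H2; lia.
Qed.

Lemma tagged_partition_cat :
  tagged_partition u w (n1 + n2) (cat_pts n1 t1 t2) (cat_tags n1 tau1 tau2).
Proof.
  pose proof P1 as (A0 & _ & A2 & A3). pose proof P2 as (_ & B1 & B2 & B3).
  split; [rewrite cat_pts_lo by lia; exact A0|].
  split; [rewrite cat_pts_hi by exact junction; exact B1|].
  split.
  - apply (cat_index (fun _ x y _ => x < y)); intros; auto.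
  - apply (cat_index (fun _ x y z => x <= z <= y)); intros; auto.
Qed.

Lemma rs_sum_cat d F gamma :
  rs_sum d F gamma (n1 + n2) (cat_pts n1 t1 t2) (cat_tags n1 tau1 tau2) =
  rs_sum d F gamma n1 t1 tau1 + rs_sum d F gamma n2 t2 tau2.
Proof.
  unfold rs_sum. rewrite rsum_split. f_equal; apply rsum_ext; intros j Hj.
  - rewrite !cat_pts_lo, cat_tags_lo by lia. reflexivity.
  - replace (S (n1 + j)) with (n1 + S j)%nat by lia.
    now rewrite !cat_pts_hi, cat_tags_hi by exact junction.
Qed.

Lemma poly_sum_cat d gamma :
  poly_sum d gamma (n1 + n2) (cat_pts n1 t1 t2) = poly_sum d gamma n1 t1 + poly_sum d gamma n2 t2.
Proof.
  unfold poly_sum. rewrite rsum_split. f_equal; apply rsum_ext; intros j Hj.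
  - rewrite !cat_pts_lo by lia. reflexivity.
  - replace (S (n1 + j)) with (n1 + S j)%nat by lia. now rewrite !cat_pts_hi by exact junction.
Qed.

End Concatenation.

(** * Approximating the increment of [f] along [gamma] *)

Section Approximation.

Variables (d : nat) (f : vec -> R) (F : vec -> vec) (gamma : R -> vec).

Lemma poly_sum_nonneg n t : 0 <= poly_sum d gamma n t.
Proof. apply rsum_nonneg; intros; apply vnorm_nonneg. Qed.

Definition rs_approx e1 s u v : Prop := exists n t tau, tagged_partition u v n t tau /\
  Rabs (rs_sum d F gamma n t tau - (f (gamma v) - f (gamma u))) <= e1 * poly_sum d gamma n t + s.

Definition step_err tau u v : R :=
  dot d (F (gamma tau)) (vsub (gamma v) (gamma u)) - (f (gamma v) - f (gamma u)).

Lemma step_err_sym tau u v : step_err tau v u = - step_err tau u v.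
Proof. unfold step_err. rewrite !dot_vsub_r. ring. Qed.

Lemma rs_approx_weaken e1 s s' u v : s <= s' -> rs_approx e1 s u v -> rs_approx e1 s' u v.
Proof. intros Hs (n & t & tau & HP & H). exists n, t, tau. split; [exact HP | lra]. Qed.

Lemma rs_approx_refl e1 s u : 0 <= s -> rs_approx e1 s u u.
Proof.
  intros Hs. exists O, (fun _ => u), (fun _ => u). split; [apply tagged_partition_refl|].
  unfold rs_sum, poly_sum; simpl. rewrite Rminus_diag, Rminus_0_r, Rabs_R0. lra.
Qed.

Lemma rs_approx_single e1 s u v tau : u < v -> u <= tau <= v ->
  Rabs (step_err tau u v) <= e1 * vnorm d (vsub (gamma v) (gamma u)) + s -> rs_approx e1 s u v.
Proof.
  intros Huv Htau H. exists 1%nat, (fun k => match k with O => u | _ => v end), (fun _ => tau).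
  split; [split; [|split; [|split]]; try reflexivity; intros k Hk; replace k with O by lia; simpl; lra|].
  unfold rs_sum, poly_sum; simpl. rewrite !Rplus_0_l. exact H.
Qed.

Lemma rs_approx_cat e1 s1 s2 u v w :
  rs_approx e1 s1 u v -> rs_approx e1 s2 v w -> rs_approx e1 (s1 + s2) u w.
Proof.
  intros (n1 & t1 & tau1 & P1 & H1) (n2 & t2 & tau2 & P2 & H2).
  exists (n1 + n2)%nat, (cat_pts n1 t1 t2), (cat_tags n1 tau1 tau2).
  split; [exact (tagged_partition_cat _ _ _ _ _ _ _ _ _ P1 P2)|].
  rewrite (rs_sum_cat _ _ _ _ _ _ _ _ _ P1 P2), (poly_sum_cat _ _ _ _ _ _ _ _ _ P1 P2).
  match goal with |- Rabs ?X <= _ =>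
    replace X with ((rs_sum d F gamma n1 t1 tau1 - (f (gamma v) - f (gamma u))) +
                    (rs_sum d F gamma n2 t2 tau2 - (f (gamma w) - f (gamma v)))) by ring end.
  eapply Rle_trans; [apply Rabs_triang | lra].
Qed.

Lemma rs_sum_single_tag u v n t tau' tau h : tagged_partition u v n t tau' -> u <= tau <= v ->
  (forall x y, u <= x <= v -> u <= y <= v -> norm1 d (vsub (F (gamma x)) (F (gamma y))) <= h) ->
  Rabs (dot d (F (gamma tau)) (vsub (gamma v) (gamma u)) - rs_sum d F gamma n t tau')
    <= h * poly_sum d gamma n t.
Proof.
  intros HP Htau Hosc. pose proof HP as (T0 & Tn & _).
  assert (Htel : dot d (F (gamma tau)) (vsub (gamma v) (gamma u)) =
    rsum n (fun k => dot d (F (gamma tau)) (vsub (gamma (t (S k))) (gamma (t k))))).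
  { rewrite (rsum_ext n _ (fun k => dot d (F (gamma tau)) (gamma (t (S k))) -
                                    dot d (F (gamma tau)) (gamma (t k)))) by (intros; apply dot_vsub_r).
    rewrite (rsum_telescope n (fun j => dot d (F (gamma tau)) (gamma (t j)))), T0, Tn.
    apply dot_vsub_r. }
  rewrite Htel. unfold rs_sum, poly_sum. rewrite <- rsum_minus.
  eapply Rle_trans; [apply rsum_abs|]. rewrite <- rsum_scal. apply rsum_le. intros k Hk.
  rewrite <- dot_vsub_l. eapply Rle_trans; [apply dot_le_norm1_vnorm|].
  apply Rmult_le_compat_r; [apply vnorm_nonneg|].
  apply Hosc; [exact Htau | exact (tagged_partition_tag_range _ _ _ _ _ HP k Hk)].
Qed.

End Approximation.

Lemma rsum_increment_bound d (gamma : R -> vec) (phi : R -> R) (term : nat -> R) c s n t :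
  0 <= s ->
  (forall j, (j < n)%nat -> exists m q qtau, tagged_partition (t j) (t (S j)) m q qtau /\
     Rabs (term j - (phi (t (S j)) - phi (t j))) <= c * poly_sum d gamma m q + s) ->
  exists m q qtau, tagged_partition (t O) (t n) m q qtau /\
    Rabs (rsum n term - (phi (t n) - phi (t O))) <= c * poly_sum d gamma m q + INR n * s.
Proof.
  intros Hs Hloc. induction n as [|n IH].
  - exists O, (fun _ => t O), (fun _ => t O). split; [apply tagged_partition_refl|].
    unfold poly_sum; simpl. rewrite Rminus_diag, Rminus_0_r, Rabs_R0. lra.
  - destruct IH as (m1 & q1 & tau1 & P1 & H1); [intros j Hj; apply Hloc; lia|].
    destruct (Hloc n ltac:(lia)) as (m2 & q2 & tau2 & P2 & H2).
    exists (m1 + m2)%nat, (cat_pts m1 q1 q2), (cat_tags m1 tau1 tau2).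
    split; [exact (tagged_partition_cat _ _ _ _ _ _ _ _ _ P1 P2)|].
    rewrite (poly_sum_cat _ _ _ _ _ _ _ _ _ P1 P2), S_INR. simpl rsum.
    match goal with |- Rabs ?X <= _ =>
      replace X with ((rsum n term - (phi (t n) - phi (t O))) +
                      (term n - (phi (t (S n)) - phi (t n)))) by ring end.
    eapply Rle_trans; [apply Rabs_triang | lra].
Qed.

(** * Paths through finitely many exceptional points *)

Definition avoids d (L : list vec) (x : vec) : Prop :=
  forall e, In e L -> exists i, (i < d)%nat /\ x i <> e i.

Section PathIntegral.

Variables (d : nat) (K : vec -> Prop) (f : vec -> R) (F : vec -> vec) (gamma : R -> vec) (a b : R).
Hypothesis f_cont : cont_on_scalar d K f.
Hypothesis F_cont : cont_on_vec d K F.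
Hypothesis gamma_path : is_path d K gamma a b.

Let gamma_in_K t : a <= t <= b -> K (gamma t).
Proof. apply gamma_path. Qed.

Lemma f_gamma_cont x : a <= x <= b -> forall eps, 0 < eps -> exists r, 0 < r /\
  forall z, a <= z <= b -> Rabs (z - x) < r -> Rabs (f (gamma z) - f (gamma x)) < eps.
Proof.
  intros Hx eps Heps. destruct (f_cont (gamma x) (gamma_in_K x Hx) eps Heps) as (r1 & Hr1 & H1).
  destruct (proj2 gamma_path x Hx r1 Hr1) as (r & Hr & H2).
  exists r; split; [exact Hr|]. intros z Hz Hzx. apply H1; auto.
Qed.

Lemma F_gamma_cont_norm1 x : a <= x <= b -> forall eps, 0 < eps -> exists r, 0 < r /\
  forall z, a <= z <= b -> Rabs (z - x) < r -> norm1 d (vsub (F (gamma z)) (F (gamma x))) < eps.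
Proof.
  intros Hx eps Heps.
  destruct (cont_on_vec_norm1 d K F (gamma x) F_cont (gamma_in_K x Hx) eps Heps) as (r1 & Hr1 & H1).
  destruct (proj2 gamma_path x Hx r1 Hr1) as (r & Hr & H2).
  exists r; split; [exact Hr|]. intros z Hz Hzx. apply H1; auto.
Qed.

Lemma step_err_dist0 tau u v : a <= u <= b -> a <= v <= b ->
  vnorm d (vsub (gamma v) (gamma u)) = 0 -> step_err d f F gamma tau u v = 0.
Proof.
  intros Hu Hv H0. unfold step_err.
  rewrite (cont_on_scalar_dist0 d K f (gamma u) (gamma v)), dot_coords0_r; auto.
  - ring.
  - intros i Hi. now apply (vnorm_eq0_coord d).
Qed.

Lemma step_err_deriv x : a <= x <= b -> strong_deriv_at d K f F (gamma x) ->
  forall e1, 0 < e1 -> exists r, 0 < r /\ forall z, a <= z <= b -> Rabs (z - x) < r ->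
    Rabs (step_err d f F gamma x x z) <= e1 * vnorm d (vsub (gamma z) (gamma x)).
Proof.
  intros Hx Hderiv e1 He1. destruct (Hderiv e1 He1) as (rho & Hrho & H1).
  destruct (proj2 gamma_path x Hx rho Hrho) as (r & Hr & H2).
  exists r; split; [exact Hr|]. intros z Hz Hzx.
  pose proof (vnorm_nonneg d (vsub (gamma z) (gamma x))).
  set (n := vnorm d (vsub (gamma z) (gamma x))) in *.
  destruct (Req_dec n 0) as [E|E].
  - rewrite step_err_dist0, Rabs_R0 by auto. fold n; nra.
  - specialize (H1 (gamma z) (gamma_in_K z Hz) ltac:(split; [fold n; lra | now apply H2])).
    fold n in H1. unfold Rdiv in H1. rewrite Rabs_mult, Rabs_inv, (Rabs_pos_eq n) in H1 by lra.
    apply (Rmult_lt_compat_r n) in H1; [|lra]. rewrite Rmult_assoc, Rinv_l, Rmult_1_r in H1 by lra.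
    unfold step_err. rewrite <- Rabs_Ropp.
    replace (- _) with (f (gamma z) - f (gamma x) - dot d (F (gamma x)) (vsub (gamma z) (gamma x))) by ring.
    lra.
Qed.

Lemma step_err_near x : a <= x <= b -> forall s, 0 < s -> exists r, 0 < r /\
  forall z, a <= z <= b -> Rabs (z - x) < r -> Rabs (step_err d f F gamma x x z) <= s.
Proof.
  intros Hx s Hs. set (M := norm1 d (F (gamma x)) + 1). pose proof (norm1_nonneg d (F (gamma x))).
  destruct (proj2 gamma_path x Hx (s / (2 * M))) as (r1 & Hr1 & H1);
    [apply Rdiv_lt_0_compat; unfold M; lra|].
  destruct (f_gamma_cont x Hx (s / 2)) as (r2 & Hr2 & H2); [lra|].
  exists (Rmin r1 r2). split; [now apply Rmin_glb_lt|]. intros z Hz Hzx.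
  pose proof (Rmin_l r1 r2). pose proof (Rmin_r r1 r2).
  specialize (H1 z Hz ltac:(lra)). specialize (H2 z Hz ltac:(lra)).
  pose proof (dot_le_norm1_vnorm d (F (gamma x)) (vsub (gamma z) (gamma x))) as Hdot.
  pose proof (vnorm_nonneg d (vsub (gamma z) (gamma x))).
  assert (Hprod : norm1 d (F (gamma x)) * vnorm d (vsub (gamma z) (gamma x)) <= M * (s / (2 * M)))
    by (apply Rmult_le_compat; unfold M in *; lra).
  replace (M * (s / (2 * M))) with (s / 2) in Hprod by (field; unfold M; lra).
  unfold step_err. eapply Rle_trans; [apply Rabs_triang|]. rewrite Rabs_Ropp. lra.
Qed.

Lemma rs_approx_interior lo hi e1 : a <= lo -> lo <= hi -> hi <= b -> 0 < e1 ->
  (forall t, lo <= t <= hi -> strong_deriv_at d K f F (gamma t)) ->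
  rs_approx d f F gamma e1 0 lo hi.
Proof.
  intros Ha Hlh Hb He1 Hderiv.
  apply (real_induction lo hi (rs_approx d f F gamma e1 0 lo)); [exact Hlh | now apply rs_approx_refl | |].
  - intros x Hx Hlo. destruct (step_err_deriv x ltac:(lra) (Hderiv x ltac:(lra)) e1 He1) as (r & Hr & H).
    exists (x + r / 2). split; [lra|]. intros z Hz Hzh.
    destruct (Req_dec z x) as [->|Hne]; [exact Hlo|].
    replace 0 with (0 + 0) by ring. apply rs_approx_cat with (v := x); [exact Hlo|].
    apply rs_approx_single with (tau := x); [lra | lra|].
    rewrite Rplus_0_r. apply H; [lra | rewrite Rabs_pos_eq; lra].
  - intros x Hx Hbelow. destruct (step_err_deriv x ltac:(lra) (Hderiv x ltac:(lra)) e1 He1) as (r & Hr & H).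
    set (z := Rmax lo (x - r / 2)).
    assert (Hz : lo <= z < x /\ x - r / 2 <= z)
      by (unfold z; repeat split; [apply Rmax_l | apply Rmax_lub_lt; lra | apply Rmax_r]).
    replace 0 with (0 + 0) by ring. apply rs_approx_cat with (v := z); [apply Hbelow; lra|].
    apply rs_approx_single with (tau := x); [lra | lra|].
    rewrite step_err_sym, Rabs_Ropp, vnorm_sym, Rplus_0_r.
    apply H; [lra | rewrite Rabs_left; lra].
Qed.

(* The endpoints need not be points of differentiability: a short first and
   last step carry an error that is small by continuity alone. *)
Lemma rs_approx_open c dd e1 s : a <= c -> c < dd -> dd <= b -> 0 < e1 -> 0 < s ->
  (forall t, c < t < dd -> strong_deriv_at d K f F (gamma t)) ->
  rs_approx d f F gamma e1 s c dd.
Proof.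
  intros Ha Hcd Hb He1 Hs Hderiv.
  destruct (step_err_near c ltac:(lra) (s / 2) ltac:(lra)) as (r1 & Hr1 & H1).
  destruct (step_err_near dd ltac:(lra) (s / 2) ltac:(lra)) as (r2 & Hr2 & H2).
  set (m := Rmin (Rmin r1 r2) (dd - c)).
  assert (Hm : 0 < m /\ m <= r1 /\ m <= r2 /\ m <= dd - c).
  { unfold m. pose proof (Rmin_l (Rmin r1 r2) (dd - c)). pose proof (Rmin_r (Rmin r1 r2) (dd - c)).
    pose proof (Rmin_l r1 r2). pose proof (Rmin_r r1 r2).
    repeat split; try lra. repeat apply Rmin_glb_lt; lra. }
  assert (He : forall u v, 0 <= e1 * vnorm d (vsub (gamma v) (gamma u)))
    by (intros; apply Rmult_le_pos; [lra | apply vnorm_nonneg]).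
  apply rs_approx_weaken with (s := s / 2 + 0 + s / 2); [lra|].
  apply rs_approx_cat with (v := (dd - m / 3)); [apply rs_approx_cat with (v := (c + m / 3))|].
  - apply rs_approx_single with (tau := c); [lra | lra|].
    pose proof (H1 (c + m / 3) ltac:(lra) ltac:(rewrite Rabs_pos_eq; lra)). pose proof (He c (c + m / 3)). lra.
  - apply rs_approx_interior; [lra | lra | lra | exact He1 | intros; apply Hderiv; lra].
  - apply rs_approx_single with (tau := dd); [lra | lra|]. rewrite step_err_sym, Rabs_Ropp.
    pose proof (H2 (dd - m / 3) ltac:(lra) ltac:(rewrite Rabs_left; lra)). pose proof (He (dd - m / 3) dd). lra.
Qed.

Lemma hitting_times_closed (e : vec) u v : a <= u -> v <= b ->
  forall m, u <= m <= v ->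
  (forall r, 0 < r -> exists t, (u <= t <= v /\ forall i, (i < d)%nat -> gamma t i = e i) /\
                                Rabs (t - m) < r) ->
  u <= m <= v /\ forall i, (i < d)%nat -> gamma m i = e i.
Proof.
  intros Hu Hv m Hm Hap. split; [exact Hm|]. intros i Hi. apply NNPP; intros Hne.
  assert (Hpos : 0 < Rabs (gamma m i - e i)) by (apply Rabs_pos_lt; lra).
  destruct (proj2 gamma_path m ltac:(lra) _ Hpos) as (r & Hr & Hc).
  destruct (Hap r Hr) as (t & (Ht & Hte) & Htm). specialize (Hc t ltac:(lra) Htm).
  pose proof (coord_le_vnorm d (vsub (gamma t) (gamma m)) i Hi) as Hcoord.
  unfold vsub at 1 in Hcoord. rewrite Hte, Rabs_minus_sym in Hcoord by exact Hi. lra.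
Qed.

(* Induction on the exceptional points: the times at which [gamma] passes
   through a new exceptional point [e] form a closed set; between its first
   and last element [w1 <= w2] the single step [w1, w2] costs nothing, since
   [gamma w1 = gamma w2 = e], and outside it [e] is avoided. *)
Lemma rs_approx_exceptions L : forall c dd e1 s, a <= c -> c < dd -> dd <= b -> 0 < e1 -> 0 < s ->
  (forall t, c < t < dd -> avoids d L (gamma t) -> strong_deriv_at d K f F (gamma t)) ->
  rs_approx d f F gamma e1 s c dd.
Proof.
  induction L as [|e L IH]; intros c dd e1 s Ha Hcd Hb He1 Hs Hderiv.
  { apply rs_approx_open; auto. intros t Ht. apply Hderiv; [exact Ht | intros e' []]. }
  set (A := fun t => c <= t <= dd /\ forall i, (i < d)%nat -> gamma t i = e i).
  assert (Havoid : forall t, c < t < dd -> ~ A t -> avoids d L (gamma t) -> avoids d (e :: L) (gamma t)).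
  { intros t Ht HnA HL e' [<-|He']; [|now apply HL].
    apply NNPP; intros Hn. apply HnA. split; [lra|]. intros i Hi. apply NNPP; intros Hne.
    apply Hn; eauto. }
  destruct (classic (exists t, A t)) as [Hhit|Hnohit].
  2: { apply IH; auto. intros t Ht HL. apply Hderiv; [exact Ht|]. apply Havoid; eauto. }
  assert (HA : forall t, A t -> c <= t <= dd) by (intros t []; assumption).
  assert (HAc : forall m, c <= m <= dd -> (forall r, 0 < r -> exists t, A t /\ Rabs (t - m) < r) -> A m)
    by (intros m Hm; apply hitting_times_closed; lra).
  destruct (closed_set_has_min A c dd HA HAc Hhit) as (w1 & Hw1 & Hmin).
  destruct (closed_set_has_max A c dd HA HAc Hhit) as (w2 & Hw2 & Hmax).
  pose proof (HA _ Hw1). pose proof (HA _ Hw2). pose proof (Hmin _ Hw2).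
  apply rs_approx_weaken with (s := s / 2 + 0 + s / 2); [lra|].
  apply rs_approx_cat with (v := w2); [apply rs_approx_cat with (v := w1)|].
  - destruct (Req_dec c w1) as [<-|]; [apply rs_approx_refl; lra|].
    apply IH; try lra. intros t Ht HL. apply Hderiv; [lra|]. apply Havoid; [lra | | exact HL].
    intros HAt. pose proof (Hmin t HAt). lra.
  - destruct (Req_dec w1 w2) as [<-|]; [apply rs_approx_refl; lra|].
    apply rs_approx_single with (tau := w1); [lra | lra|].
    assert (Hdist0 : vnorm d (vsub (gamma w2) (gamma w1)) = 0).
    { apply vnorm_eq0_of_coords. intros i Hi. unfold vsub.
      rewrite (proj2 Hw1 i Hi), (proj2 Hw2 i Hi). ring. }
    rewrite step_err_dist0, Hdist0, Rabs_R0 by (auto; lra). lra.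
  - destruct (Req_dec w2 dd) as [->|]; [apply rs_approx_refl; lra|].
    apply IH; try lra. intros t Ht HL. apply Hderiv; [lra|]. apply Havoid; [lra | | exact HL].
    intros HAt. pose proof (Hmax t HAt). lra.
Qed.

Lemma rs_sum_error_bound E h delta s n t tau : 0 < h -> 0 < s ->
  (forall x, a <= x <= b -> avoids d E (gamma x) -> strong_deriv_at d K f F (gamma x)) ->
  (forall x y, a <= x <= b -> a <= y <= b -> Rabs (x - y) < delta ->
     norm1 d (vsub (F (gamma x)) (F (gamma y))) <= h) ->
  tagged_partition a b n t tau -> (forall j, (j < n)%nat -> t (S j) - t j < delta) ->
  exists m q qtau, tagged_partition a b m q qtau /\
    Rabs (rs_sum d F gamma n t tau - (f (gamma b) - f (gamma a)))
      <= 2 * h * poly_sum d gamma m q + INR n * s.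
Proof.
  intros Hh Hs Hderiv Hosc HP Hmesh. pose proof HP as (T0 & Tn & Hinc & Htag).
  rewrite <- T0, <- Tn. unfold rs_sum.
  apply (rsum_increment_bound d gamma (fun x => f (gamma x))); [lra|]. intros j Hj.
  pose proof (tagged_partition_range _ _ _ _ _ HP j ltac:(lia)).
  pose proof (tagged_partition_range _ _ _ _ _ HP (S j) ltac:(lia)).
  pose proof (Hinc j Hj). pose proof (Htag j Hj). pose proof (Hmesh j Hj).
  destruct (rs_approx_exceptions E (t j) (t (S j)) h s) as (m & q & qtau & HQ & Happrox); try lra.
  { intros x Hx. apply Hderiv. lra. }
  exists m, q, qtau. split; [exact HQ|].
  assert (Hfreeze : Rabs (dot d (F (gamma (tau j))) (vsub (gamma (t (S j))) (gamma (t j))) -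
                          rs_sum d F gamma m q qtau) <= h * poly_sum d gamma m q).
  { apply (rs_sum_single_tag d F gamma _ _ m q qtau (tau j) h HQ); [lra|].
    intros x y Hx Hy. apply Hosc; [lra | lra | apply Rabs_def1; lra]. }
  match goal with |- Rabs ?X <= _ =>
    replace X with ((dot d (F (gamma (tau j))) (vsub (gamma (t (S j))) (gamma (t j))) -
                     rs_sum d F gamma m q qtau) +
                    (rs_sum d F gamma m q qtau - (f (gamma (t (S j))) - f (gamma (t j))))) by ring end.
  eapply Rle_trans; [apply Rabs_triang | lra].
Qed.

End PathIntegral.

Theorem mainTheorem3 (d : nat) (K : vec -> Prop) (f : vec -> R) (F : vec -> vec)
  (gamma : R -> vec) (a b : R) :
  (forall x, K x -> in_Rd d x) ->
  compact_set d K ->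
  cont_on_scalar d K f ->
  cont_on_vec d K F ->
  a < b ->
  is_path d K gamma a b ->
  rectifiable d gamma a b ->
  (exists E : list vec, forall t, a <= t <= b ->
      (forall e, In e E -> exists i, (i < d)%nat /\ gamma t i <> e i) ->
      strong_deriv_at d K f F (gamma t)) ->
  path_integral_is d F gamma a b (f (gamma b) - f (gamma a)).
Proof.
  intros _ _ Hf HF Hab Hpath (M & HM) (E & Hderiv) eps Heps.
  set (L := Rabs M + 1). assert (HL : 0 < L) by (pose proof (Rabs_pos M); unfold L; lra).
  set (h := eps / (4 * L)). assert (Hh : 0 < h) by (apply Rdiv_lt_0_compat; lra).
  destruct (uniform_continuity_norm1 d (fun x => F (gamma x)) a b ltac:(lra)
              (F_gamma_cont_norm1 d K F gamma a b HF Hpath) h Hh) as (delta & Hdelta & Hosc).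
  exists delta. split; [exact Hdelta|]. intros n t tau (Hn & T0 & Tn & Hinc) Hmesh Htag.
  set (s := eps / (4 * (INR n + 1))). pose proof (pos_INR n).
  assert (Hs : 0 < s) by (apply Rdiv_lt_0_compat; lra).
  assert (HP : tagged_partition a b n t tau) by (split; [|split; [|split]]; assumption).
  destruct (rs_sum_error_bound d K f F gamma a b Hf Hpath E h delta s n t tau Hh Hs Hderiv Hosc HP Hmesh)
    as (m & q & qtau & HQ & Herr).
  assert (Hlen : poly_sum d gamma m q <= L).
  { pose proof (HM m q (tagged_partition_is_partition _ _ _ _ _ Hab HQ)).
    pose proof (Rle_abs M). unfold L. lra. }
  assert (2 * h * poly_sum d gamma m q <= eps / 2).
  { pose proof (poly_sum_nonneg d gamma m q).
    apply Rle_trans with (2 * h * L); [apply Rmult_le_compat_l; lra | unfold h; right; field; lra]. }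
  assert (INR n * s <= eps / 4).
  { unfold s. apply (Rmult_le_reg_r (4 * (INR n + 1))); [lra|].
    replace (INR n * (eps / (4 * (INR n + 1))) * (4 * (INR n + 1))) with (INR n * eps) by (field; lra).
    nra. }
  lra.
Qed.
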